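(* Consider the controlled mechanical system on $G$ $$\dot g=T_eR_g(\xi),\qquad \dot\xi+\sharp\big[\mathrm{ad}^*_\xi\flat(\xi)\big]=\sum_{a=1}^m u^af_a,$$ where $f_1,\dots,f_m\in\mathfrak{g}$ are linearly independent, $\mathfrak{f}=\mathrm{span}\{f_1,\dots,f_m\}$, $m<n=\dim\mathfrak{g}$. Let $\mathfrak{d}\subseteq\mathfrak{g}$ be a subspace with $\mathfrak{g}=\mathfrak{f}\oplus\mathfrak{d}$. For $\xi\in\mathfrak{g}$ write uniquely $\sharp[\mathrm{ad}^*_\xi\flat(\xi)]=\eta(\xi)+\sum_b\tau^b(\xi)f_b$ with $\eta(\xi)\in\mathfrak{d}$, and define the feedback $u^*(\xi)=(\tau^1(\xi),\dots,\tau^m(\xi))$. Then $u^*$ makes $\mathfrak{d}$ a virtual nonholonomic constraint: every solution of the closed-loop system with $u=u^*(\xi)$ and $\xi(0)\in\mathfrak{d}$ satisfies $\xi(t)\in\mathfrak{d}$ for all $t\ge0$. Moreover, this control law is unique: if $\xi(t)$ is a solution of the system for some control $u(t)$ with $\xi(t)\in\mathfrak{d}$ for all $t$, then $u(t)=u^*(\xi(t))$ for all $t$.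
   Context: $G$ is a Lie group of dimension $n$ with Lie algebra $\mathfrak{g}=T_eG$, $R_g(h)=hg$, and $\langle\cdot,\cdot\rangle$ is an inner product on $\mathfrak{g}$ (inducing a right-invariant metric on $G$). $\flat:\mathfrak{g}\to\mathfrak{g}^*$, $\flat(\xi)(\eta)=\langle\xi,\eta\rangle$, $\sharp=\flat^{-1}$; $\mathrm{ad}^*_\xi$ is the dual of $\mathrm{ad}_\xi=[\xi,\cdot]$. A virtual nonholonomic constraint for the system is a subspace $\mathfrak{d}\subseteq\mathfrak{g}$ that is controlled invariant: there is a control law such that solutions of the closed-loop system with $\xi(0)\in\mathfrak{d}$ satisfy $\xi(t)\in\mathfrak{d}$ for all $t\ge0$. *)

From HB Require Import structures.
From mathcomp Require Import all_boot all_order all_algebra.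
From mathcomp Require Import all_classical all_reals all_analysis.
Set Implicit Arguments. Unset Strict Implicit. Unset Printing Implicit Defensive.
Import Order.TTheory GRing.Theory Num.Theory.
Local Open Scope ring_scope.

(* The Lie algebra g is modelled as R^n = 'rV[R]_n (n = dim g). *)

Definition is_lie_bracket (R : realType) (n : nat)
  (br : 'rV[R]_n -> 'rV[R]_n -> 'rV[R]_n) : Prop :=
  [/\ (forall (a : R) x y z, br (a *: x + y) z = a *: br x z + br y z),
      (forall x y, br x y = - br y x) &
      (forall x y z, br x (br y z) + br y (br z x) + br z (br x y) = 0)].

Definition is_inner_product (R : realType) (n : nat)
  (ip : 'rV[R]_n -> 'rV[R]_n -> R) : Prop :=
  [/\ (forall (a : R) x y z, ip (a *: x + y) z = a * ip x z + ip y z),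
      (forall x y, ip x y = ip y x) &
      (forall x, x != 0 -> 0 < ip x x)].

(* Covectors (elements of g^* ) are represented as functions g -> R
   (they are only ever applied to linear ones). *)
Definition flat (R : realType) (n : nat) (ip : 'rV[R]_n -> 'rV[R]_n -> R)
  (x : 'rV[R]_n) : 'rV[R]_n -> R := fun z => ip x z.

Definition coad (R : realType) (n : nat) (br : 'rV[R]_n -> 'rV[R]_n -> 'rV[R]_n)
  (x : 'rV[R]_n) (alpha : 'rV[R]_n -> R) : 'rV[R]_n -> R :=
  fun z => alpha (br x z).

(* sharp = flat^{-1}: the (unique, for an inner product) w with <w, .> = alpha. *)
Definition sharp (R : realType) (n : nat) (ip : 'rV[R]_n -> 'rV[R]_n -> R)
  (alpha : 'rV[R]_n -> R) : 'rV[R]_n :=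
  xget 0 [set w | forall z, ip w z = alpha z].

Definition EP (R : realType) (n : nat) (br : 'rV[R]_n -> 'rV[R]_n -> 'rV[R]_n)
  (ip : 'rV[R]_n -> 'rV[R]_n -> R) (x : 'rV[R]_n) : 'rV[R]_n :=
  sharp ip (coad br x (flat ip x)).

(* The f-coefficients tau(xi) in  EP(xi) = eta(xi) + sum_b tau^b(xi) f_b,
   eta(xi) in d.  Rows of F are f_1..f_m; the row space of D is d. *)
Definition ustar (R : realType) (n m : nat) (br : 'rV[R]_n -> 'rV[R]_n -> 'rV[R]_n)
  (ip : 'rV[R]_n -> 'rV[R]_n -> R) (F : 'M[R]_(m, n)) (D : 'M[R]_n)
  (x : 'rV[R]_n) : 'rV[R]_m :=
  xget 0 [set c : 'rV[R]_m | (EP br ip x - c *m F <= D)%MS].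

Definition is_solution (R : realType) (n m : nat)
  (br : 'rV[R]_n -> 'rV[R]_n -> 'rV[R]_n) (ip : 'rV[R]_n -> 'rV[R]_n -> R)
  (F : 'M[R]_(m, n)) (u : R -> 'rV[R]_m) (xi : R -> 'rV[R]_n) : Prop :=
  forall t : R, 0 <= t ->
    derivable xi t 1 /\ 'D_1 xi t + EP br ip (xi t) = u t *m F.

From HB Require Import structures.
From mathcomp Require Import all_boot all_order all_algebra.
From mathcomp Require Import all_classical all_reals all_analysis.
Import Order.TTheory GRing.Theory Num.Theory.
Local Open Scope ring_scope.
Import numFieldNormedType.Exports.
Local Open Scope classical_set_scope.

(* A curve stays in the row space of [D] iff its image under [cokermx D]
   vanishes, so [D] is invariant iff the velocity stays in [D].  Along the
   closed loop the velocity is minus the [D]-component [eta] of [EP], and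
   conversely a solution confined to [D] has velocity in [D], which forces
   [u *m F] to be the [F]-component of [EP]; as [F + D] is direct and [F] row
   free, that component has unique coefficients.  Nothing beyond this splitting
   is used: the bracket and the inner product only enter through [EP]. *)

Lemma derive_vanishing_ge0 (R : realType) (V : normedModType R) (h : R -> V) t :
  0 <= t -> derivable h t 1 -> (forall s, 0 <= s -> h s = 0) -> 'D_1 h t = 0.
Proof.
move=> t0 dh h0.
rewrite /derive cvg_at_rightE //.
apply: cvg_lim => //; apply: cvg_near_cst.
near=> s.
have s0 : 0 < s by near: s; exact: nbhs_right_gt.
rewrite /= h0; last by rewrite /shift /= addr_ge0 // ?scaler1 ltW.
by rewrite h0 // subrr scaler0.
Unshelve. all: by end_near. Qed.

Lemma derive_eq0_cst_ge0 {R : realType} {g : R -> R} {t : R} :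
  (forall s, 0 <= s -> derivable g s 1 /\ 'D_1 g s = 0) ->
  0 <= t -> g t = g 0.
Proof.
move=> Hg t0.
have [] := @MVT_segment R g (fun _ => 0) 0 t t0.
- move=> x; rewrite in_itv /= => /andP[x0 _].
  have [dx Dx] := Hg x (ltW x0).
  by rewrite -Dx; apply: derivableP.
- apply: continuous_in_subspaceT => x; rewrite inE /= in_itv /= => /andP[x0 _].
  have [dx _] := Hg x x0.
  exact/differentiable_continuous/derivable1_diffP.
- by move=> c _; rewrite mul0r => /eqP; rewrite subr_eq0 => /eqP.
Qed.

Lemma derivable_mulmx {R : realType} {m n p} (K : 'M[R]_(n, p))
    {xi : R -> 'M[R]_(m, n)} {t : R} :
  derivable xi t 1 ->
  derivable (fun s => xi s *m K) t 1 /\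
  'D_1 (fun s => xi s *m K) t = 'D_1 xi t *m K.
Proof.
move=> dxi.
have dxi_ij := (derivable_mxP xi t 1).1 dxi.
have entryE i j : (fun s => (xi s *m K) i j) = \sum_(k < n) (fun s => xi s i k * K k j).
  by apply/funext => s; rewrite fct_sumE !mxE.
have dxiK : derivable (fun s => xi s *m K) t 1.
  by apply/derivable_mxP => i j; rewrite entryE; apply: derivable_sum => k;
    exact: derivableM.
split => //.
rewrite derive_mx // [in RHS]derive_mx //; apply/matrixP => i j.
rewrite !mxE entryE derive_sum => [|k]; last exact: derivableM.
apply: eq_bigr => k _.
by rewrite !mxE deriveM // derive_cst scaler0 add0r mulrC.
Qed.

Section CurvesInSubspace.
Variables (R : realType) (n : nat) (D : 'M[R]_n) (xi : R -> 'rV[R]_n).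

Lemma derive_submx_ge0 t :
  0 <= t -> derivable xi t 1 -> (forall s, 0 <= s -> (xi s <= D)%MS) ->
  ('D_1 xi t <= D)%MS.
Proof.
move=> t0 dxi xiD.
rewrite submxE; have [dxiK <-] := derivable_mulmx (cokermx D) dxi.
rewrite derive_vanishing_ge0 // => s s0.
by apply/eqP; rewrite -submxE xiD.
Qed.

Lemma submx_invariant_ge0 :
  (forall s, 0 <= s -> derivable xi s 1 /\ ('D_1 xi s <= D)%MS) ->
  (xi 0 <= D)%MS -> forall t, 0 <= t -> (xi t <= D)%MS.
Proof.
move=> Hxi xi0 t t0.
rewrite submxE; apply/eqP/matrixP => i j; rewrite [RHS]mxE.
have entry_cst s : 0 <= s ->
    derivable (fun s => (xi s *m cokermx D) i j) s 1 /\
    'D_1 (fun s => (xi s *m cokermx D) i j) s = 0.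
  move=> s0; have [dxi xi'D] := Hxi s s0.
  have [dxiK dxiKE] := derivable_mulmx (cokermx D) dxi.
  split; first by move: dxiK => /derivable_mxP; apply.
  move: (derive_mx dxiK) => /matrixP/(_ i j); rewrite mxE => <-.
  by move: xi'D; rewrite dxiKE submxE => /eqP ->; rewrite mxE.
rewrite (derive_eq0_cst_ge0 entry_cst t0).
by move: xi0; rewrite submxE => /eqP ->; rewrite mxE.
Qed.

End CurvesInSubspace.

Lemma mxdirect_coef_unique (R : fieldType) m n (F : 'M[R]_(m, n)) (D : 'M[R]_n)
    (v : 'rV[R]_n) (c1 c2 : 'rV[R]_m) :
  row_free F -> mxdirect (F + D) ->
  (v - c1 *m F <= D)%MS -> (v - c2 *m F <= D)%MS -> c1 = c2.
Proof.
move=> freeF dirFD vc1D vc2D.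
have c21F_D : ((c2 - c1) *m F <= D)%MS.
  have -> : (c2 - c1) *m F = (v - c1 *m F) - (v - c2 *m F).
    by rewrite mulmxBl opprB [X in _ = X]addrC addrA subrK.
  by rewrite addmx_sub // (eqmx_opp (v - c2 *m F)).
have : ((c2 - c1) *m F <= F :&: D)%MS by rewrite sub_capmx submxMl.
rewrite (mxdirect_addsP dirFD) submx0 => /eqP c21F0.
by apply/esym/eqP; rewrite -subr_eq0; apply/eqP/(row_free_inj freeF); rewrite c21F0 mul0mx.
Qed.

Section Feedback.
Variables (R : realType) (n m : nat) (br : 'rV[R]_n -> 'rV[R]_n -> 'rV[R]_n)
  (ip : 'rV[R]_n -> 'rV[R]_n -> R) (F : 'M[R]_(m, n)) (D : 'M[R]_n).

Lemma ustarP x : (F + D == 1%:M)%MS ->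
  (EP br ip x - ustar br ip F D x *m F <= D)%MS.
Proof.
move=> FD1; apply: (@xgetPex _ 0 [set c | (EP br ip x - c *m F <= D)%MS]).
have : (EP br ip x <= F + D)%MS by rewrite (eqmxP FD1) submx1.
move=> /sub_addsmxP [[a b] /= ->]; exists a => /=.
by rewrite addrAC subrr add0r submxMl.
Qed.

Lemma ustar_unique x c :
  row_free F -> mxdirect (F + D) -> (F + D == 1%:M)%MS ->
  (EP br ip x - c *m F <= D)%MS -> c = ustar br ip F D x.
Proof. by move=> freeF dirFD FD1 /mxdirect_coef_unique; apply=> //; exact: ustarP. Qed.

End Feedback.

Theorem theorem5 (R : realType) (n m : nat)
  (br : 'rV[R]_n -> 'rV[R]_n -> 'rV[R]_n) (ip : 'rV[R]_n -> 'rV[R]_n -> R)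
  (F : 'M[R]_(m, n)) (D : 'M[R]_n) :
  is_lie_bracket br -> is_inner_product ip ->
  (m < n)%N -> row_free F ->
  mxdirect (F + D) -> (F + D == 1%:M)%MS ->
  (forall xi : R -> 'rV[R]_n,
      is_solution br ip F (fun t => ustar br ip F D (xi t)) xi ->
      (xi 0 <= D)%MS ->
      forall t : R, 0 <= t -> (xi t <= D)%MS) /\
  (forall (u : R -> 'rV[R]_m) (xi : R -> 'rV[R]_n),
      is_solution br ip F u xi ->
      (forall t : R, 0 <= t -> (xi t <= D)%MS) ->
      forall t : R, 0 <= t -> u t = ustar br ip F D (xi t)).
Proof.
move=> _ _ _ freeF dirFD FD1; split.
- move=> xi sol xi0; apply: submx_invariant_ge0 => // s s0.
  have [dxi xiE] := sol s s0; split => //.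
  have -> : 'D_1 xi s = - (EP br ip (xi s) - ustar br ip F D (xi s) *m F).
    by rewrite -xiE opprB addrK.
  by rewrite (eqmx_opp (_ - _)) ustarP.
- move=> u xi sol xiD t t0; have [dxi xiE] := sol t t0.
  apply: ustar_unique => //.
  have -> : EP br ip (xi t) - u t *m F = - 'D_1 xi t.
    by rewrite -xiE opprD addrCA subrr addr0.
  by rewrite (eqmx_opp ('D_1 xi t)) derive_submx_ge0.
Qed.
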